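(* Fix an integer $d\geqslant 3$. Then there is a constant $C>0$ (depending only on $d$) such that $P(n,d)\leqslant C\,n^{2d-3}$ for all sufficiently large $n$; i.e., $P(n,d)=O(n^{2d-3})$ as $n\to\infty$.
   Context: Let $S_n$ be the symmetric group on $[n]$, permutations written as $\pi=(\pi(1),\dots,\pi(n))$. The characteristic set of $\pi$ is $A(\pi)=\{(\pi(i),\pi(i+1)):1\leqslant i<n\}$, and the block permutation distance is $d_B(\pi_1,\pi_2)=|A(\pi_1)\setminus A(\pi_2)|$ (equivalently, $d_B(\pi_1,\pi_2)+1$ is the minimum number of consecutive segments into which $\pi_1$ must be cut so that $\pi_2$ is obtained by rearranging these segments). The $(n,d)$-block permutation graph $\mathcal{G}_{n,d}$ has vertex set $S_n$, with distinct $\pi,\sigma$ adjacent iff $d_B(\pi,\sigma)<d$. Let $\mathcal{H}_{n,d}$ be the subgraph of $\mathcal{G}_{n,d}$ induced by the neighborhood of the identity permutation $(1,2,\dots,n)$ (i.e. by all $\sigma$ with $1\leqslant d_B(\sigma,\mathrm{id})\leqslant d-1$), and let $P(n,d)$ denote the number of edges of $\mathcal{H}_{n,d}$. *)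

From mathcomp Require Import all_boot all_order all_fingroup.
Set Implicit Arguments. Unset Strict Implicit. Unset Printing Implicit Defensive.

(* Permutations of [n] are represented by 'S_n = {perm 'I_n}, i.e. on {0,..,n-1}
   (a relabeling of {1,..,n}); the sequence form is (p 0, p 1, ..., p (n-1)). *)

Definition charset (n : nat) (p : 'S_n) : {set 'I_n * 'I_n} :=
  [set x | [exists i : 'I_n, exists j : 'I_n,
             (j == i.+1 :> nat) && (x == (p i, p j))]].

Definition dB (n : nat) (p1 p2 : 'S_n) : nat := #|charset p1 :\: charset p2|.

Definition adjB (n d : nat) (p q : 'S_n) : bool := (p != q) && (dB p q < d).

Definition Hvert (n d : nat) : {set 'S_n} :=
  [set s : 'S_n | (1 <= dB s 1) && (dB s 1 <= d - 1)].

Definition Pnd (n d : nat) : nat :=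
  #|[set E : {set 'S_n} | [exists s : 'S_n, exists t : 'S_n,
       [&& E == [set s; t], s \in Hvert n d, t \in Hvert n d & adjB d s t]]]|.

From mathcomp Require Import all_boot all_order all_fingroup.
From mathcomp Require Import zify.
Set Implicit Arguments. Unset Strict Implicit. Unset Printing Implicit Defensive.

(* A value v is a breakpoint of s when v is not immediately followed by v + 1
   in s; the largest value always is one.  Breakpoints other than the last entry
   of s come from pairs of A(s) missing from A(id), so |B(s)| <= d_B(s, id) + 1.
   The first coordinate is injective on A(s) :&: A(t) and avoids the symmetric
   difference of B(s) and B(t), whence
   2 |B(s) :|: B(t)| <= d_B(s, id) + d_B(t, id) + d_B(s, t) + 3 <= 3 d,
   i.e. |B(s) :|: B(t)| <= 2 d - 2 on every edge {s, t} of H_{n,d}.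
   A permutation is determined by its first entry and the successors of its
   breakpoints, and all of these are run heads (0 or the successor of a
   breakpoint), so boundedly many permutations have their breakpoints in a given
   set U of size at most 2 d - 2.  Since U contains the largest value, there are
   at most n ^ (2 d - 3) such sets. *)

Lemma leq_exp2rW m1 m2 e : m1 <= m2 -> m1 ^ e <= m2 ^ e.
Proof. by case: e => // e; rewrite leq_exp2r. Qed.

Section Successor.

Variable n : nat.
Implicit Types (s : 'S_n) (u v w : 'I_n).

Definition pnext s v : option 'I_n := omap s (insub ((s^-1)%g v).+1).

Lemma pnextP s v u : (pnext s v == Some u) = ((s^-1)%g u == ((s^-1)%g v).+1 :> nat).
Proof.
rewrite /pnext; case: insubP => [j _ <-|lt] /=.
  by rewrite (inj_eq Some_inj) (canF_eq (permK s)) eq_sym.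
by apply/esym/eqP => e; move: (ltn_ord ((s^-1)%g u)); rewrite e (negbTE lt).
Qed.

Lemma pnext_perm s (i j : 'I_n) : j = i.+1 :> nat -> pnext s (s i) = Some (s j).
Proof. by move=> ji; apply/eqP; rewrite pnextP !permK ji. Qed.

Lemma pnext_inj s v w u : pnext s v = Some u -> pnext s w = Some u -> v = w.
Proof.
move=> /eqP + /eqP; rewrite !pnextP => /eqP -> /eqP [] /ord_inj; exact: perm_inj.
Qed.

Lemma mem_charset s v u : ((v, u) \in charset s) = (pnext s v == Some u).
Proof.
rewrite inE pnextP; apply/existsP/eqP => [[i /existsP [j /andP [/eqP ji /eqP [-> ->]]]]|e].
  by rewrite !permK.
by exists ((s^-1)%g v); apply/existsP; exists ((s^-1)%g u); rewrite -e !permKV !eqxx.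
Qed.

End Successor.

Section Breakpoints.

Variable n : nat.
Implicit Types (s t : 'S_n.+1) (u v : 'I_n.+1) (U : {set 'I_n.+1}).

Lemma card_charset s : #|charset s| = n.
Proof.
pose f (i : 'I_n) := (s (widen_ord (leqnSn n) i), s (lift ord0 i)).
have -> : charset s = f @: setT.
  apply/setP => -[v u]; rewrite mem_charset; apply/idP/imsetP => [|[i _ [-> ->]]].
    rewrite pnextP => /eqP e; have lt_vn : (s^-1)%g v < n by rewrite -ltnS -e ltn_ord.
    exists (Ordinal lt_vn) => //; rewrite /f; congr (_, _).
      by rewrite (_ : widen_ord _ _ = (s^-1)%g v) ?permKV //; apply: val_inj.
    by rewrite (_ : lift _ _ = (s^-1)%g u) ?permKV //; apply: val_inj; rewrite /= e.
  by rewrite (pnext_perm _ (j := lift ord0 i)).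
rewrite card_imset ?cardsT ?card_ord // => i j [/perm_inj/(congr1 val) /= ij _].
exact: val_inj.
Qed.

Definition breakpoints s : {set 'I_n.+1} := [set v | omap val (pnext s v) != Some v.+1].

Lemma pnext_notin_breakpoints s v :
  v \notin breakpoints s -> omap val (pnext s v) = Some v.+1.
Proof. by rewrite inE negbK => /eqP. Qed.

Lemma ord_max_breakpoints s : ord_max \in breakpoints s.
Proof.
by rewrite inE; case: (pnext s ord_max) => //= u; rewrite (inj_eq Some_inj) neq_ltn ltn_ord.
Qed.

Lemma card_breakpoints s : #|breakpoints s| <= (dB s 1).+1.
Proof.
have sub : breakpoints s \subset s ord_max |: fst @: (charset s :\: charset 1).
  apply/subsetP => v; rewrite in_setU1 inE; case en: (pnext s v) => [u|] /= bv.
    apply/orP; right; apply/imsetP; exists (v, u) => //.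
    rewrite in_setD !mem_charset en eqxx andbT pnextP invg1 !perm1.
    by apply: contra bv => /eqP ->.
  move: en; rewrite /pnext; case: insubP => //= lt _.
  suff <- : (s^-1)%g v = ord_max by rewrite permKV eqxx.
  by apply: val_inj; move: (ltn_ord ((s^-1)%g v)) lt => /=; lia.
apply: leq_trans (subset_leq_card sub) _; rewrite cardsU1 addnC /dB -[X in _ <= X]addn1.
by apply: leq_add; [apply: leq_imset_card | apply: leq_b1].
Qed.

Lemma card_charsetI_breakpointsD s t :
  #|charset s :&: charset t| + #|breakpoints s :\: breakpoints t|
    + #|breakpoints t :\: breakpoints s| <= n.+1.
Proof.
set Bs := breakpoints s; set Bt := breakpoints t.
have fst_inj : {in charset s :&: charset t &, injective fst}.
  move=> [v u] [v' u']; rewrite !in_setI !mem_charset /=.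
  move=> /andP [/eqP es _] /andP [/eqP es' _] /= ev; rewrite -ev es in es'.
  by rewrite ev; case: es' => ->.
have shared_break r r' v u : pnext r v = Some u -> pnext r' v = Some u ->
    v \in breakpoints r -> v \in breakpoints r'.
  by move=> er er'; apply: contraLR; rewrite !inE !negbK er er'.
have sub : fst @: (charset s :&: charset t) \subset ~: ((Bs :\: Bt) :|: (Bt :\: Bs)).
  apply/subsetP => _ /imsetP [[v u] + ->]; rewrite in_setI !mem_charset /=.
  move=> /andP [/eqP es /eqP et].
  move/implyP: (shared_break _ _ _ _ es et); move/implyP: (shared_break _ _ _ _ et es).
  rewrite !in_setC !in_setU !in_setD.
  by case: (v \in breakpoints s); case: (v \in breakpoints t).
have disj : (Bs :\: Bt) :&: (Bt :\: Bs) = set0.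
  by apply/setP => v; rewrite in_setI !in_setD in_set0; case: (v \in Bs); case: (v \in Bt).
move: (subset_leq_card sub) (cardsC ((Bs :\: Bt) :|: (Bt :\: Bs))).
rewrite card_in_imset // cardsU disj cards0 card_ord subn0 => le_AK eq_n.
by apply: leq_trans (eq_leq eq_n); rewrite -addnA addnC leq_add2l.
Qed.

Lemma card_breakpointsU s t :
  2 * #|breakpoints s :|: breakpoints t| <= dB s 1 + dB t 1 + dB s t + 3.
Proof.
have dB_st : dB s t = n - #|charset s :&: charset t| by rewrite /dB cardsD card_charset.
move: (card_charsetI_breakpointsD s t) (card_breakpoints s) (card_breakpoints t).
move: (cardsUI (breakpoints s) (breakpoints t)) (subsetIl (breakpoints s) (breakpoints t)).
rewrite !cardsD [breakpoints t :&: _]setIC => + /subset_leq_card; lia.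
Qed.

Definition run_heads U : {set 'I_n.+1} := ord0 |: [set inord v.+1 | v : 'I_n.+1 in U].

Lemma run_headsS U (V : {set 'I_n.+1}) : U \subset V -> run_heads U \subset run_heads V.
Proof. by move=> UV; rewrite setUS // imsetS. Qed.

Lemma card_run_heads U : #|run_heads U| <= #|U|.+1.
Proof. by rewrite cardsU1 -[#|U|.+1]add1n leq_add ?leq_b1 ?leq_imset_card. Qed.

Lemma run_headsPn s u :
  u \notin run_heads (breakpoints s) -> exists2 v, v \notin breakpoints s & pnext s v = Some u.
Proof.
rewrite in_setU1 negb_or => /andP [u_neq0 /imsetP no_pred].
have u_gt0 : 0 < u by rewrite lt0n; apply: contra u_neq0 => /eqP u0; apply/eqP/val_inj.
have lt_pred : u.-1 < n.+1 by rewrite prednK // ltnW.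
have pred_u : u = (inord u.-1 : 'I_n.+1).+1 :> nat by rewrite inordK // prednK.
have nb : inord u.-1 \notin breakpoints s.
  by apply/negP => b; apply: no_pred; exists (inord u.-1); rewrite -?pred_u ?inord_val.
exists (inord u.-1) => //; move: (pnext_notin_breakpoints nb).
by case: pnext => //= w [ew]; congr Some; apply: ord_inj; rewrite ew -pred_u.
Qed.

Lemma perm0_run_heads s : s ord0 \in run_heads (breakpoints s).
Proof. by apply: contraT => /run_headsPn [v _ /eqP]; rewrite pnextP permK. Qed.

Lemma pnext_breakpoint_run_heads s v u :
  v \in breakpoints s -> pnext s v = Some u -> u \in run_heads (breakpoints s).
Proof.
move=> bv nv; apply: contraT => /run_headsPn [w nbw nw].
by move: bv; rewrite (pnext_inj nv nw) (negbTE nbw).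
Qed.

Lemma eq_perm_pnext s t : s ord0 = t ord0 -> pnext s =1 pnext t -> s = t.
Proof.
move=> st0 st; have st_inord k : k < n.+1 -> s (inord k) = t (inord k).
  elim: k => [_|k IH lt_k].
    by rewrite (_ : inord 0 = ord0) //; apply: val_inj; rewrite /= inordK.
  have k_succ : (inord k.+1 : 'I_n.+1) = (inord k : 'I_n.+1).+1 :> nat.
    by rewrite !inordK // ltnW.
  move: (pnext_perm s k_succ) (pnext_perm t k_succ).
  by rewrite IH ?(ltnW lt_k) // st => -> [].
by apply/permP => i; rewrite -(inord_val i) st_inord.
Qed.

Lemma card_perms_breakpoints_sub U :
  #|[set s : 'S_n.+1 | breakpoints s \subset U]| <= #|U|.+1 * #|U|.+2 ^ #|U|.
Proof.
set A := [set s | _].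
pose R : {set option 'I_n.+1} := None |: Some @: run_heads U.
pose code s := (s ord0, [ffun v => if v \in U then pnext s v else None]).
have code_inj : {in A &, injective code}.
  move=> s t; rewrite !inE => sU tU [st0 /ffunP st]; apply: eq_perm_pnext st0 _ => v.
  have [vU|vNU] := boolP (v \in U); first by move: (st v); rewrite !ffunE vU.
  have /pnext_notin_breakpoints : v \notin breakpoints s by apply: contra vNU; apply: subsetP.
  have /pnext_notin_breakpoints : v \notin breakpoints t by apply: contra vNU; apply: subsetP.
  case: (pnext s v) => [x|]; case: (pnext t v) => [y|] //= [ey] [ex].
  by congr Some; apply: ord_inj; rewrite ex ey.
have code_sub : code @: A \subset setX (run_heads U) [set f in pffun_on None U R].
  apply/subsetP => _ /imsetP [s + ->]; rewrite inE => sU.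
  have headsU := subsetP (run_headsS sU).
  rewrite in_setX /= headsU ?perm0_run_heads //= inE; apply/pffun_onP; split.
    by apply/subsetP => v; rewrite inE ffunE; case: (v \in U).
  move=> _ /mapP [v + ->]; rewrite mem_enum ffunE => vU; rewrite vU in_setU1.
  case en: (pnext s v) => [u|] //=; apply: imset_f.
  have [bv|nbv] := boolP (v \in breakpoints s).
    exact: headsU (pnext_breakpoint_run_heads bv en).
  move: (pnext_notin_breakpoints nbv); rewrite en => -[eu].
  have -> : u = inord v.+1 by apply: ord_inj; rewrite inordK -eu.
  by apply/setU1P; right; apply/imsetP; exists v.
have card_R : #|R| <= #|U|.+2.
  rewrite cardsU1 card_imset; last exact: Some_inj.
  by rewrite -[#|U|.+2]add1n leq_add ?leq_b1 ?card_run_heads.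
rewrite -(card_in_imset code_inj); apply: leq_trans (subset_leq_card code_sub) _.
rewrite cardsX (cardsE (pffun_on None U R)) card_pffun_on leq_mul ?card_run_heads //.
exact: leq_exp2rW.
Qed.

End Breakpoints.

Lemma card_sets_containing_le (T : finType) (x0 : T) e :
  #|[set U : {set T} | (x0 \in U) && (#|U| <= e.+1)]| <= #|T| ^ e.
Proof.
set S := [set U | _].
have sub : S \subset [set x0 |: [set f i | i : 'I_e] | f : {ffun 'I_e -> T}].
  apply/subsetP => U; rewrite inE => /andP [x0U cardU].
  set r := enum (U :\ x0).
  have size_r : size r <= e by rewrite -cardE; move: cardU; rewrite (cardsD1 x0 U) x0U.
  apply/imsetP; exists [ffun i : 'I_e => nth x0 r i] => //.
  apply/setP => x; rewrite in_setU1; have [-> //|x_neq0 /=] := eqVneq x x0.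
  apply/idP/imsetP => [xU|[i _ ->]].
    have xr : x \in r by rewrite mem_enum !inE x_neq0.
    have lt_xr : index x r < e by apply: leq_trans size_r; rewrite index_mem.
    by exists (Ordinal lt_xr); rewrite // ffunE nth_index.
  rewrite ffunE; have [lt_ir|le_ri] := ltnP i (size r); last by rewrite nth_default.
  by move: (mem_nth x0 lt_ir); rewrite mem_enum => /setD1P [].
apply: leq_trans (subset_leq_card sub) _; apply: leq_trans (leq_imset_card _ _) _.
by rewrite card_ffun card_ord.
Qed.

Lemma card_pairs_few_breakpoints n k (X : {set 'S_n.+1 * 'S_n.+1}) :
  {in X, forall x, #|breakpoints x.1 :|: breakpoints x.2| <= k.+1} ->
  #|X| <= (k.+2 * k.+3 ^ k.+1) ^ 2 * n.+1 ^ k.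
Proof.
move=> X_small; set c := k.+2 * k.+3 ^ k.+1.
set G := [set U : {set 'I_n.+1} | (ord_max \in U) && (#|U| <= k.+1)].
rewrite -sum1_card (partition_big (fun x => breakpoints x.1 :|: breakpoints x.2) (mem G)) /=.
  apply: (@leq_trans (\sum_(U in G) c ^ 2)).
    apply: leq_sum => U; rewrite inE => /andP [_ cardU].
    set A := [set s : 'S_n.+1 | breakpoints s \subset U].
    rewrite sum1dep_card; apply: leq_trans (_ : #|setX A A| <= _).
      apply/subset_leq_card/subsetP => -[s t]; rewrite !inE /= => /andP [_ /eqP <-].
      by rewrite subsetUl subsetUr.
    have card_A : #|A| <= c.
      apply: leq_trans (card_perms_breakpoints_sub U) _.
      rewrite leq_mul ?ltnS //; apply: leq_trans (leq_pexp2l _ cardU) => //.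
      by rewrite leq_exp2rW ?ltnS.
    by rewrite cardsX -mulnn leq_mul.
  rewrite sum_nat_const mulnC leq_mul //.
  by move: (card_sets_containing_le (@ord_max n) k); rewrite card_ord.
move=> x /X_small xk; rewrite inE xk andbT.
by rewrite in_setU ord_max_breakpoints.
Qed.

Definition Harcs n d : {set 'S_n * 'S_n} :=
  [set x | [&& x.1 \in Hvert n d, x.2 \in Hvert n d & adjB d x.1 x.2]].

Lemma Pnd_le_card_Harcs n d : Pnd n d <= #|Harcs n d|.
Proof.
apply: leq_trans (leq_imset_card (fun x => [set x.1; x.2]) _).
apply/subset_leq_card/subsetP => E; rewrite inE.
case/existsP=> s /existsP [t /and4P [/eqP -> s_H t_H st_adj]].
by apply/imsetP; exists (s, t); rewrite // inE s_H t_H st_adj.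
Qed.

Lemma Harcs_few_breakpoints n d : 3 <= d ->
  {in Harcs n.+1 d, forall x, #|breakpoints x.1 :|: breakpoints x.2| <= (2 * d - 3).+1}.
Proof.
move=> d_ge3 [s t]; rewrite !inE /adjB /=.
case/and3P=> [/andP [_ ds] /andP [_ dt] /andP [_ dst]].
by move: (card_breakpointsU s t); set B := #|_|; lia.
Qed.

Theorem mainTheorem2 (d : nat) (hd : 3 <= d) :
  exists (C : nat) (N : nat), 0 < C /\
    forall n : nat, N <= n -> Pnd n d <= C * n ^ (2 * d - 3).
Proof.
set k := 2 * d - 3.
exists ((k.+2 * k.+3 ^ k.+1) ^ 2), 1; split; first by rewrite !expn_gt0 muln_gt0 expn_gt0.
case=> [//|n] _; apply: leq_trans (Pnd_le_card_Harcs _ _) _.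
exact: card_pairs_few_breakpoints (@Harcs_few_breakpoints n d hd).
Qed.
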